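(* Let $t\in\mathbb{N}_{>0}$ be a time parameter. (1) There exists a deterministic neural timer network with time parameter $t$ that uses $O(\log t)$ deterministic threshold gates. (2) Every deterministic neural timer network with time parameter $t$ requires $\Omega(\log t)$ neurons.
   Context: A neural network consists of input neurons (no incoming edges), output neurons and auxiliary neurons, connected by directed weighted edges with weights $w(u,v)\in\mathbb{R}$ ($w(u,v)=0$ means no edge; self-loops are allowed); every neuron $v$ has a threshold $b(v)\ge 0$, and every neuron is either excitatory (all outgoing weights $\ge 0$) or inhibitory (all outgoing weights $\le 0$). The network evolves in discrete synchronous rounds; $u^\tau\in\{0,1\}$ indicates whether $u$ fires in round $\tau$, the firing of input neurons is given externally, and for a non-input neuron $u$ the potential is $\mathrm{pot}(u,\tau)=\sum_v w(v,u)\,v^{\tau-1}-b(u)$. A deterministic threshold gate fires in round $\tau$ iff $\mathrm{pot}(u,\tau)\ge 0$. Neurons have no memory beyond this rule. The size of a network is measured by its number of auxiliary neurons. A deterministic neural timer with time parameter $t$ is a network of deterministic threshold gates with one input neuron $x$, one output neuron $y$ and auxiliary neurons, such that in every round $\tau$, $y^\tau=1$ iff there exists a round $\tau'$ with $\tau-t\le\tau'<\tau$ and $x^{\tau'}=1$. *)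

From Stdlib Require Import Reals List Arith.
Import ListNotations.
Open Scope R_scope.

Inductive neuron : Type :=
  | NX : neuron
  | NY : neuron
  | Aux : nat -> neuron.

(* Weights/thresholds of Aux i for
   i >= aux_count are irrelevant (those neurons do not exist). *)
Record network : Type := mkNetwork {
  aux_count : nat;
  weight : neuron -> neuron -> R;   (* weight u v = w(u,v), edge u -> v *)
  thresh : neuron -> R
}.

Definition neurons (N : network) : list neuron :=
  NX :: NY :: map Aux (seq 0 (aux_count N)).

Definition is_neuron (N : network) (u : neuron) : Prop :=
  match u with NX => True | NY => True | Aux i => (i < aux_count N)%nat end.

Definition well_formed (N : network) : Prop :=
  (forall u, is_neuron N u -> weight N u NX = 0) /\
  (forall v, is_neuron N v -> 0 <= thresh N v) /\
  (forall u, is_neuron N u ->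
     (forall v, is_neuron N v -> 0 <= weight N u v) \/
     (forall v, is_neuron N v -> weight N u v <= 0)).

Definition b2R (b : bool) : R := if b then 1 else 0.

Fixpoint state (N : network) (xs : nat -> bool) (tau : nat) (v : neuron) : bool :=
  match tau with
  | O => match v with NX => xs O | _ => false end
  | S tau' =>
      match v with
      | NX => xs (S tau')
      | _ =>
        if Rle_dec 0
             (fold_right Rplus 0
                (map (fun u => weight N u v * b2R (state N xs tau' u)) (neurons N))
              - thresh N v)
        then true else false
      end
  end.

Definition is_timer (N : network) (t : nat) : Prop :=
  well_formed N /\
  forall (xs : nat -> bool) (tau : nat),
    state N xs tau NY = true <->
    exists tau', (tau - t <= tau')%nat /\ (tau' < tau)%nat /\ xs tau' = true.

From Stdlib Require Import Reals Lra Lia Arith List Bool.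
Import ListNotations.
Open Scope R_scope.

(* Upper bound: an input spike starts an "active" neuron that sustains itself
   through a self-loop, and resets a binary counter of m = log2 t + 1 bits made of
   threshold gates, which then counts the rounds.  A "stop" neuron reads the counter
   through weights 2^j and silences the active neuron once t - 4 further rounds have
   passed without a spike (the 4 absorbs the delays along the path input, reset,
   counter, stop, active, output); the output fires iff the input or the active
   neuron fired in the previous round.  Each bit and each carry needs an excitatory and an
   inhibitory copy, whence 4m + 8 auxiliary neurons.

   Lower bound: feed a single spike in round 0.  Since the dynamics is deterministic
   and the input stays silent, equal configurations in rounds 1 <= i < j <= t + 1
   would force equal outputs in rounds i + (t + 1 - j) <= t and t + 1, where the
   output is on and off respectively.  So these t + 1 configurations of the n + 2
   neurons are distinct, and t < 2^(n+2). *)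

Fixpoint rsum (f : nat -> R) (n : nat) : R :=
  match n with O => 0 | S n' => rsum f n' + f n' end.

Lemma rsum_ext f g n : (forall i, (i < n)%nat -> f i = g i) -> rsum f n = rsum g n.
Proof.
  induction n as [|n IH]; intros Hfg; cbn; [reflexivity|].
  rewrite IH, Hfg; [reflexivity|lia|intros i Hi; apply Hfg; lia].
Qed.

Lemma rsum_zero n : rsum (fun _ => 0) n = 0.
Proof. induction n as [|n IH]; cbn; [|rewrite IH]; lra. Qed.

Lemma rsum_plus f g n : rsum (fun i => f i + g i) n = rsum f n + rsum g n.
Proof. induction n as [|n IH]; cbn; [|rewrite IH]; lra. Qed.

Lemma rsum_shift f n : rsum f (S n) = f O + rsum (fun i => f (S i)) n.
Proof. induction n as [|n IH]; cbn in *; [|rewrite IH]; lra. Qed.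

Lemma rsum_single a c n : (a < n)%nat ->
  rsum (fun i => if (i =? a)%nat then c else 0) n = c.
Proof.
  induction n as [|n IH]; intros Ha; [lia|cbn].
  destruct (Nat.eqb_spec n a) as [->|Hna].
  - rewrite (rsum_ext _ (fun _ => 0)), rsum_zero; [lra|].
    intros i Hi; destruct (Nat.eqb_spec i a); [lia|reflexivity].
  - rewrite IH by lia; lra.
Qed.

Lemma rsum_prefix f n p : (n <= p)%nat ->
  rsum (fun i => if (i <? n)%nat then f i else 0) p = rsum f n.
Proof.
  induction p as [|p IH]; intros Hnp.
  - replace n with O by lia; reflexivity.
  - destruct (Nat.eq_dec n (S p)) as [->|Hn].
    + apply rsum_ext; intros i Hi; destruct (Nat.ltb_spec i (S p)); [reflexivity|lia].
    + cbn [rsum]; rewrite IH by lia; destruct (Nat.ltb_spec p n); [lia|lra].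
Qed.

Lemma rsum_by_four f n :
  rsum f (4 * n) =
  rsum (fun j => f (4 * j)%nat + f (4 * j + 1)%nat + f (4 * j + 2)%nat + f (4 * j + 3)%nat) n.
Proof.
  induction n as [|n IH]; [reflexivity|].
  replace (4 * S n)%nat with (S (S (S (S (4 * n))))) by lia.
  cbn [rsum]; rewrite IH.
  replace (S (4 * n)) with (4 * n + 1)%nat by lia.
  replace (S (4 * n + 1)) with (4 * n + 2)%nat by lia.
  replace (S (4 * n + 2)) with (4 * n + 3)%nat by lia.
  lra.
Qed.

Lemma rsum_fold_seq (h : nat -> R) n :
  fold_right Rplus 0 (map h (seq 0 n)) = rsum h n.
Proof.
  induction n as [|n IH]; [reflexivity|].
  rewrite seq_S, map_app, fold_right_app; cbn [rsum map fold_right Nat.add]; rewrite <- IH.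
  generalize (map h (seq 0 n)); intros l.
  induction l as [|a l IHl]; cbn [fold_right]; [|rewrite IHl]; lra.
Qed.

Lemma rsum_b2R_le (f : nat -> bool) n : rsum (fun i => b2R (f i)) n <= INR n.
Proof.
  induction n as [|n IH]; cbn [rsum]; [simpl; lra|].
  rewrite S_INR; destruct (f n); cbn [b2R]; lra.
Qed.

Lemma INR_pow2 k : INR (2 ^ k) = 2 ^ k.
Proof. now rewrite pow_INR. Qed.

Fixpoint all_below (f : nat -> bool) (n : nat) : bool :=
  match n with O => true | S n' => all_below f n' && f n' end.

Lemma all_below_ext f g n : (forall i, (i < n)%nat -> f i = g i) -> all_below f n = all_below g n.
Proof.
  induction n as [|n IH]; intros Hfg; cbn; [reflexivity|].
  rewrite IH, Hfg; [reflexivity|lia|intros i Hi; apply Hfg; lia].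
Qed.

Lemma all_below_shift f n : all_below f (S n) = f O && all_below (fun i => f (S i)) n.
Proof.
  induction n as [|n IH]; cbn in *; [now rewrite andb_true_r|].
  rewrite IH; symmetry; apply andb_assoc.
Qed.

Lemma rsum_b2R_full (f : nat -> bool) n :
  INR n <= rsum (fun i => b2R (f i)) n <-> all_below f n = true.
Proof.
  induction n as [|n IH]; cbn [rsum all_below]; [simpl; split; [reflexivity|lra]|].
  rewrite S_INR, andb_true_iff, <- IH.
  pose proof (rsum_b2R_le f n) as Hle.
  destruct (f n); cbn [b2R].
  - split; [intros; split; [lra|reflexivity]|intros [? _]; lra].
  - split; [lra|intros [_ Hfalse]; discriminate].
Qed.

(** * Dynamics of a network *)

Definition potential (N : network) (st : neuron -> bool) (v : neuron) : R :=
  fold_right Rplus 0 (map (fun u => weight N u v * b2R (st u)) (neurons N)) - thresh N v.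

Lemma state_input N xs s : state N xs s NX = xs s.
Proof. now destruct s. Qed.

Lemma state_succ N xs s v : v <> NX ->
  state N xs (S s) v = if Rle_dec 0 (potential N (state N xs s) v) then true else false.
Proof. now destruct v. Qed.

Lemma state_succ_true N xs s v : v <> NX ->
  state N xs (S s) v = true <-> 0 <= potential N (state N xs s) v.
Proof.
  intros Hv; rewrite state_succ by exact Hv.
  destruct (Rle_dec _ _); split; easy.
Qed.

Lemma potential_split N st v : potential N st v =
  weight N NX v * b2R (st NX) + weight N NY v * b2R (st NY)
  + rsum (fun i => weight N (Aux i) v * b2R (st (Aux i))) (aux_count N) - thresh N v.
Proof. unfold potential, neurons; cbn; rewrite map_map, rsum_fold_seq; lra. Qed.

Lemma potential_ext N st st' v : (forall u, In u (neurons N) -> st u = st' u) ->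
  potential N st v = potential N st' v.
Proof.
  intros Hst; unfold potential; f_equal; f_equal.
  apply map_ext_in; intros u Hu; now rewrite Hst.
Qed.

Definition config (N : network) (xs : nat -> bool) (s : nat) : list bool :=
  map (state N xs s) (neurons N).

Lemma config_shift N xs i j : (forall d, xs (i + d)%nat = xs (j + d)%nat) ->
  config N xs i = config N xs j -> forall d, config N xs (i + d) = config N xs (j + d).
Proof.
  intros Hxs Hij d; induction d as [|d IH]; [now rewrite !Nat.add_0_r|].
  unfold config in *; rewrite map_ext_in_iff in IH; apply map_ext_in; intros u _.
  rewrite !Nat.add_succ_r.
  destruct u as [| |k].
  - rewrite !state_input, <- !Nat.add_succ_r; apply Hxs.
  - rewrite !state_succ by discriminate; now rewrite (potential_ext _ _ _ _ IH).
  - rewrite !state_succ by discriminate; now rewrite (potential_ext _ _ _ _ IH).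
Qed.

(** * The lower bound *)

Fixpoint bool_lists (k : nat) : list (list bool) :=
  match k with
  | O => [[]]
  | S k' => map (cons true) (bool_lists k') ++ map (cons false) (bool_lists k')
  end.

Lemma bool_lists_length k : length (bool_lists k) = (2 ^ k)%nat.
Proof. induction k as [|k IH]; cbn; [reflexivity|]; rewrite length_app, !length_map, IH; lia. Qed.

Lemma in_bool_lists l : In l (bool_lists (length l)).
Proof.
  induction l as [|b l IH]; cbn; [now left|].
  apply in_or_app; destruct b; [left|right]; now apply in_map.
Qed.

Lemma NoDup_bool_lists_length (L : list (list bool)) k : NoDup L ->
  (forall l, In l L -> length l = k) -> (length L <= 2 ^ k)%nat.
Proof.
  intros HL Hk; rewrite <- bool_lists_length.
  apply NoDup_incl_length; [exact HL|].
  intros l Hl; rewrite <- (Hk l Hl); apply in_bool_lists.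
Qed.

Section LowerBound.

Variables (N : network) (t : nat).
Hypothesis timer : is_timer N t.

Let spike0 (s : nat) : bool := (s =? 0)%nat.

Lemma timer_output_single_spike s : state N spike0 s NY = true <-> (1 <= s <= t)%nat.
Proof.
  rewrite (proj2 timer); split.
  - intros (tau & H1 & H2 & H3); apply Nat.eqb_eq in H3; lia.
  - intros Hs; exists O; repeat split; lia.
Qed.

Lemma timer_configs_distinct i j : (1 <= i)%nat -> (i < j <= t + 1)%nat ->
  config N spike0 i <> config N spike0 j.
Proof.
  intros Hi Hij Hcfg.
  assert (Hxs : forall d, spike0 (i + d)%nat = spike0 (j + d)%nat).
  { intros d; unfold spike0; destruct (Nat.eqb_spec (i + d) 0), (Nat.eqb_spec (j + d) 0); lia. }
  pose proof (config_shift N spike0 i j Hxs Hcfg (t + 1 - j)) as Hend.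
  apply (f_equal (fun c => nth 1 c false)) in Hend; cbn in Hend.
  replace (j + (t + 1 - j))%nat with (S t) in Hend by lia.
  assert (Hon : state N spike0 (i + (t + 1 - j)) NY = true)
    by (apply timer_output_single_spike; lia).
  destruct (state N spike0 (S t) NY) eqn:Hoff; [|congruence].
  apply timer_output_single_spike in Hoff; lia.
Qed.

Lemma timer_size_lower_bound : (t < 2 ^ (aux_count N + 2))%nat.
Proof.
  set (L := map (config N spike0) (seq 1 (t + 1))).
  assert (HL : NoDup L).
  { apply NoDup_map_NoDup_ForallPairs; [|apply seq_NoDup].
    intros a b Ha Hb Hab; apply in_seq in Ha, Hb.
    destruct (Nat.lt_total a b) as [|[|]]; [|assumption|];
      exfalso; [apply (timer_configs_distinct a b)|apply (timer_configs_distinct b a)]; auto; lia. }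
  assert (Hlen : (length L <= 2 ^ (aux_count N + 2))%nat).
  { apply NoDup_bool_lists_length; [exact HL|].
    intros l Hl; apply in_map_iff in Hl as (s & <- & _).
    unfold config, neurons; cbn; rewrite !length_map, length_seq; lia. }
  unfold L in Hlen; rewrite length_map, length_seq in Hlen; lia.
Qed.

End LowerBound.

(** * The timer network *)

Fixpoint counter_bit (k j : nat) : bool :=
  match k with
  | O => false
  | S k' => xorb (counter_bit k' j) (all_below (counter_bit k') j)
  end.

Definition carry (k j : nat) : bool := all_below (counter_bit k) j.

Lemma carry_zero i : (1 <= i)%nat -> carry 0 i = false.
Proof. intros Hi; destruct i as [|i]; [lia|apply andb_false_r]. Qed.

Lemma carry_succ k n :
  carry (S k) (S n) = negb (counter_bit k 0) && all_below (fun j => counter_bit k (S j)) n.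
Proof.
  unfold carry; rewrite all_below_shift; cbn [counter_bit].
  change (all_below (counter_bit k) 0) with true.
  destruct (counter_bit k 0) eqn:Hk0; [reflexivity|cbn [xorb negb andb]].
  apply all_below_ext; intros j _.
  now rewrite all_below_shift, Hk0, xorb_false_r.
Qed.

Definition bin_value (m : nat) (f : nat -> bool) : R := rsum (fun j => 2 ^ j * b2R (f j)) m.

Lemma bin_value_ext m f g : (forall j, (j < m)%nat -> f j = g j) -> bin_value m f = bin_value m g.
Proof. intros Hfg; apply rsum_ext; intros j Hj; now rewrite Hfg. Qed.

Lemma bin_value_bounds m f : 0 <= bin_value m f <= 2 ^ m - 1.
Proof.
  induction m as [|m IH]; unfold bin_value in *; cbn [rsum pow]; [lra|].
  pose proof (pow_le 2 m); destruct (f m); cbn [b2R]; lra.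
Qed.

Lemma bin_value_counter_succ m k :
  bin_value m (counter_bit (S k)) = bin_value m (counter_bit k) + 1 - 2 ^ m * b2R (carry k m).
Proof.
  induction m as [|m IH]; unfold bin_value, carry in *; cbn [rsum pow all_below]; [cbn [b2R]; lra|].
  rewrite IH; cbn [counter_bit].
  destruct (all_below (counter_bit k) m), (counter_bit k m); cbn [b2R xorb andb]; lra.
Qed.

Lemma bin_value_counter m k : (k < 2 ^ m)%nat -> bin_value m (counter_bit k) = INR k.
Proof.
  induction k as [|k IH]; intros Hk.
  - unfold bin_value; rewrite (rsum_ext _ (fun _ => 0)), rsum_zero; [reflexivity|].
    intros j _; cbn; ring.
  - pose proof (bin_value_bounds m (counter_bit (S k))) as Hb.
    rewrite bin_value_counter_succ, IH in Hb |- * by lia.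
    apply lt_INR in Hk; rewrite INR_pow2, S_INR in Hk.
    rewrite S_INR; destruct (carry k m); cbn [b2R] in *; lra.
Qed.

Inductive role : Type :=
  | Active | Echo | Reset | Stop
  | Bit (j : nat) | BitInh (j : nat) | Carry (j : nat) | CarryInh (j : nat).

Definition index (r : role) : nat :=
  match r with
  | Active => 0 | Echo => 1 | Reset => 2 | Stop => 3
  | Bit j => 4 * S j | BitInh j => 4 * S j + 1
  | Carry j => 4 * S j + 2 | CarryInh j => 4 * S j + 3
  end.

Definition role_of (i : nat) : role :=
  match (i mod 4)%nat, (i / 4)%nat with
  | 0, 0 => Active | 1, 0 => Echo | 2, 0 => Reset | _, 0 => Stop
  | 0, S j => Bit j | 1, S j => BitInh j | 2, S j => Carry j | _, S j => CarryInh j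
  end.

Lemma role_of_index r : role_of (index r) = r.
Proof.
  assert (Hdm : forall q c, (c < 4)%nat -> ((4 * q + c) mod 4 = c /\ (4 * q + c) / 4 = q)%nat).
  { intros q c Hc; split; symmetry;
      [apply (Nat.mod_unique _ _ q)|apply (Nat.div_unique _ _ _ c)]; lia. }
  unfold role_of; destruct r as [| | | |j|j|j|j]; try reflexivity; cbn [index];
    [rewrite <- (Nat.add_0_r (4 * S j))|..];
    match goal with |- context [(4 * S j + ?c)%nat] => destruct (Hdm (S j) c) as [-> ->] end;
    first [reflexivity|lia].
Qed.

Lemma role_of_Active i : role_of i = Active -> i = 0%nat.
Proof.
  unfold role_of; generalize (Nat.div_mod_eq i 4).
  destruct (i mod 4)%nat as [|[|[|[|]]]], (i / 4)%nat; try discriminate; lia.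
Qed.

(* [Bit j] (j < m) is bit j of the counter.  A neuron cannot both excite and inhibit,
   so [BitInh 0] and [CarryInh i] are inhibitory copies of [Bit 0] and [Carry i].
   [Carry i] (1 <= i <= m) tells whether bits 0..i-1 of the current value are all set;
   it is computed in the same round as those bits, from the previous value k, since
   bits 0..i-1 of k + 1 are all set iff bit 0 of k is clear and bits 1..i-1 of k are
   set (see [carry_succ]).
   [Echo] keeps [Active] alive in the round after a reset, when [Stop] still reacts to
   the old counter value.  The other roles of the blocks have no outgoing weight. *)
Definition role_weight (m : nat) (src tgt : role) : R :=
  match tgt with
  | Active => match src with Active => 1 | Echo => 2 | Stop => -1 | _ => 0 end
  | Stop =>
      match src with Reset => - 2 ^ m | Bit j => if (j <? m)%nat then 2 ^ j else 0 | _ => 0 end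
  | Bit 0 | BitInh 0 => match src with Reset | BitInh 0 => -1 | _ => 0 end
  | Bit j =>
      if (j <? m)%nat then
        match src with
        | Reset => -3
        | Bit i | Carry i => if (i =? j)%nat then 1 else 0
        | CarryInh i => if (i =? S j)%nat then -2 else 0
        | _ => 0
        end
      else 0
  | Carry i | CarryInh i =>
      if (1 <=? i)%nat && (i <=? m)%nat then
        match src with
        | Reset | BitInh 0 => -1
        | Bit j => if (1 <=? j)%nat && (j <? i)%nat then 1 else 0
        | _ => 0
        end
      else 0
  | _ => 0
  end.

Definition input_weight (tgt : role) : R :=
  match tgt with Active => 2 | Echo | Reset => 1 | _ => 0 end.

Definition role_threshold (K : nat) (tgt : role) : R :=
  match tgt with
  | Active | Echo | Reset => 1
  | Stop => INR K
  | Bit 0 | BitInh 0 => 0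
  | Bit _ | BitInh _ => 1
  | Carry i | CarryInh i => INR (i - 1)
  end.

Definition output_weight (src : role) : R :=
  match src with Active => 1 | _ => 0 end.

Definition excitatory (r : role) : bool :=
  match r with Reset | Stop | BitInh _ | CarryInh _ => false | _ => true end.

Lemma role_weight_sign m src tgt :
  if excitatory src then 0 <= role_weight m src tgt else role_weight m src tgt <= 0.
Proof.
  assert (Hpow : forall j, 0 <= 2 ^ j) by (intros j; apply pow_le; lra).
  destruct tgt as [| | | |[|j]|[|j]|i|i], src as [| | | |[|k]|[|k]|[|k]|[|k]]; cbn;
    repeat match goal with |- context [if ?b then _ else _] => destruct b end;
    auto; try lra; first [generalize (Hpow m); lra | generalize (Hpow k); lra].
Qed.

Definition timer_weight (m : nat) (u v : neuron) : R :=
  match u, v with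
  | _, NX | NY, _ => 0
  | NX, NY => 1
  | NX, Aux k => input_weight (role_of k)
  | Aux i, NY => output_weight (role_of i)
  | Aux i, Aux k => role_weight m (role_of i) (role_of k)
  end.

Definition timer_threshold (K : nat) (v : neuron) : R :=
  match v with NX => 0 | NY => 1 | Aux k => role_threshold K (role_of k) end.

Definition timer_net (m K : nat) : network :=
  mkNetwork (8 + 4 * m) (timer_weight m) (timer_threshold K).

Lemma timer_net_well_formed m K : well_formed (timer_net m K).
Proof.
  split; [|split].
  - now intros [| |k] _.
  - intros [| |k] _; cbn; try lra.
    destruct (role_of k) as [| | | |[|j]|[|j]|i|i]; cbn; try lra; apply pos_INR.
  - intros [| |i] _.
    + left; intros [| |k] _; cbn; try lra; destruct (role_of k); cbn; lra.
    + left; intros [| |k] _; cbn; lra.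
    + pose proof (role_weight_sign m (role_of i)) as Hsign.
      destruct (excitatory (role_of i)) eqn:He; [left|right]; intros [| |k] _; cbn; auto; try lra;
        destruct (role_of i); cbn; try lra; discriminate.
Qed.

Lemma last_spike (xs : nat -> bool) s :
  (forall j, (j < s)%nat -> xs j = false) \/
  exists tau, (tau < s)%nat /\ xs tau = true /\ forall j, (tau < j < s)%nat -> xs j = false.
Proof.
  induction s as [|s [Hsilent | (tau & Htau & Hx & Hquiet)]]; [left; intros; lia| |];
    (destruct (xs s) eqn:Hs; [right; exists s; repeat split; auto; intros; lia|]).
  - left; intros j Hj; destruct (Nat.eq_dec j s) as [->|]; auto; apply Hsilent; lia.
  - right; exists tau; split; [lia|split; [exact Hx|]].
    intros j Hj; destruct (Nat.eq_dec j s) as [->|]; auto; apply Hquiet; lia.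
Qed.

Section TimerDynamics.

Variables (m K : nat) (xs : nat -> bool).

Definition fired (s : nat) (r : role) : bool := state (timer_net m K) xs s (Aux (index r)).

Let act (s : nat) (r : role) : R := b2R (fired s r).

Definition drive (s : nat) (r : role) : R :=
  input_weight r * b2R (xs s)
  + rsum (fun i => role_weight m (role_of i) r * b2R (state (timer_net m K) xs s (Aux i)))
      (8 + 4 * m).

Lemma fired_succ s r : fired (S s) r = true <-> role_threshold K r <= drive s r.
Proof.
  unfold fired; rewrite state_succ_true, potential_split by discriminate.
  cbn [timer_net aux_count weight thresh timer_weight timer_threshold].
  rewrite role_of_index, state_input; unfold drive; split; intros; lra.
Qed.

Let block_drive (s : nat) (r : role) (j : nat) : R :=
  role_weight m (Bit j) r * act s (Bit j) + role_weight m (BitInh j) r * act s (BitInh j)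
  + role_weight m (Carry j) r * act s (Carry j) + role_weight m (CarryInh j) r * act s (CarryInh j).

Lemma drive_blocks s r : drive s r =
  input_weight r * b2R (xs s)
  + role_weight m Active r * act s Active + role_weight m Echo r * act s Echo
  + role_weight m Reset r * act s Reset + role_weight m Stop r * act s Stop
  + rsum (block_drive s r) (S m).
Proof.
  unfold drive; replace (8 + 4 * m)%nat with (4 * S (S m))%nat by lia.
  rewrite rsum_by_four, rsum_shift.
  rewrite (rsum_ext _ (block_drive s r)).
  - change (4 * 0 + 3)%nat with (index Stop); change (4 * 0 + 2)%nat with (index Reset);
    change (4 * 0 + 1)%nat with (index Echo); change (4 * 0)%nat with (index Active).
    rewrite !role_of_index; unfold act, fired; ring.
  - intros j _.
    change (4 * S j + 3)%nat with (index (CarryInh j));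
    change (4 * S j + 2)%nat with (index (Carry j));
    change (4 * S j + 1)%nat with (index (BitInh j));
    change (4 * S j)%nat with (index (Bit j)).
    now rewrite !role_of_index.
Qed.

Ltac truth_table :=
  cbn [b2R andb orb negb]; split; intros; first [reflexivity | discriminate | lra].

Lemma drive_active s : drive s Active = 2 * b2R (xs s) + act s Active + 2 * act s Echo - act s Stop.
Proof.
  rewrite drive_blocks; unfold block_drive.
  rewrite (rsum_ext _ (fun _ => 0)), rsum_zero by (intros; cbn; ring).
  cbn; ring.
Qed.

Lemma drive_echo s : drive s Echo = b2R (xs s).
Proof.
  rewrite drive_blocks; unfold block_drive.
  rewrite (rsum_ext _ (fun _ => 0)), rsum_zero by (intros; cbn; ring).
  cbn; ring.
Qed.

Lemma drive_stop s : drive s Stop = bin_value m (fun j => fired s (Bit j)) - 2 ^ m * act s Reset.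
Proof.
  rewrite drive_blocks; unfold block_drive; cbn [rsum role_weight input_weight].
  rewrite Nat.ltb_irrefl.
  rewrite (rsum_ext _ (fun j => 2 ^ j * act s (Bit j))); [unfold bin_value, act; ring|].
  intros j Hj; cbn [role_weight]; rewrite (proj2 (Nat.ltb_lt j m) Hj); ring.
Qed.

Lemma drive_bit0 s : drive s (Bit 0) = - act s Reset - act s (BitInh 0).
Proof.
  rewrite drive_blocks; unfold block_drive.
  rewrite rsum_shift, (rsum_ext _ (fun _ => 0)), rsum_zero by (intros; cbn; ring).
  cbn; ring.
Qed.

Lemma drive_bit s j : (1 <= j < m)%nat ->
  drive s (Bit j) = act s (Bit j) + act s (Carry j) - 2 * act s (CarryInh (S j)) - 3 * act s Reset.
Proof.
  intros Hj; destruct j as [|j]; [lia|].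
  rewrite drive_blocks; unfold block_drive; cbn [role_weight input_weight].
  rewrite (proj2 (Nat.ltb_lt _ _) (proj2 Hj)).
  rewrite (rsum_ext _ (fun i =>
    (if (i =? S j)%nat then act s (Bit (S j)) + act s (Carry (S j)) else 0)
    + (if (i =? S (S j))%nat then -2 * act s (CarryInh (S (S j))) else 0))).
  - rewrite rsum_plus, !rsum_single by lia; ring.
  - intros i _; cbn [role_weight].
    destruct (Nat.eqb_spec i (S j)), (Nat.eqb_spec i (S (S j))); subst; try lia; ring.
Qed.

Lemma drive_carry s i : (1 <= i <= m)%nat ->
  drive s (Carry i) = rsum (fun j => act s (Bit (S j))) (i - 1) - act s Reset - act s (BitInh 0).
Proof.
  intros Hi.
  assert (Hrange : ((1 <=? i) && (i <=? m))%nat = true)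
    by (apply andb_true_intro; split; apply Nat.leb_le; lia).
  rewrite drive_blocks; unfold block_drive; rewrite rsum_shift.
  cbn [role_weight input_weight]; rewrite Hrange.
  rewrite <- (rsum_prefix _ (i - 1) m) by lia.
  rewrite (rsum_ext _ (fun j => if (j <? i - 1)%nat then act s (Bit (S j)) else 0)).
  { cbn [Nat.leb andb]; ring. }
  intros j _.
  destruct (Nat.ltb_spec (S j) i), (Nat.ltb_spec j (i - 1)); cbn; try lia; ring.
Qed.

Lemma fired_bit_inh0 s : fired (S s) (BitInh 0) = fired (S s) (Bit 0).
Proof. apply eq_iff_eq_true; rewrite !fired_succ; reflexivity. Qed.

Lemma fired_carry_inh s i : fired (S s) (CarryInh i) = fired (S s) (Carry i).
Proof. apply eq_iff_eq_true; rewrite !fired_succ; reflexivity. Qed.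

Lemma fired_active s :
  fired (S s) Active = xs s || fired s Echo || fired s Active && negb (fired s Stop).
Proof.
  apply eq_iff_eq_true; rewrite fired_succ, drive_active; unfold act; cbn [role_threshold].
  destruct (xs s), (fired s Echo), (fired s Active), (fired s Stop); truth_table.
Qed.

Lemma fired_echo s : fired (S s) Echo = xs s.
Proof.
  apply eq_iff_eq_true; rewrite fired_succ, drive_echo; cbn [role_threshold].
  destruct (xs s); truth_table.
Qed.

Lemma fired_reset s : fired (S s) Reset = xs s.
Proof. rewrite <- fired_echo; apply eq_iff_eq_true; rewrite !fired_succ; reflexivity. Qed.

Lemma fired_bit0 s : fired (S s) (Bit 0) = negb (fired s Reset) && negb (fired s (BitInh 0)).
Proof.
  apply eq_iff_eq_true; rewrite fired_succ, drive_bit0; unfold act; cbn [role_threshold].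
  destruct (fired s Reset), (fired s (BitInh 0)); truth_table.
Qed.

Lemma fired_bit s j : (1 <= j < m)%nat ->
  fired (S s) (Bit j) =
  negb (fired s Reset) && negb (fired s (CarryInh (S j))) && (fired s (Bit j) || fired s (Carry j)).
Proof.
  intros Hj; apply eq_iff_eq_true; rewrite fired_succ, drive_bit by exact Hj; unfold act.
  destruct j as [|j]; [lia|cbn [role_threshold]].
  destruct (fired s Reset), (fired s (CarryInh (S (S j)))), (fired s (Bit (S j))),
    (fired s (Carry (S j))); truth_table.
Qed.

Lemma fired_carry s i : (1 <= i <= m)%nat ->
  fired (S s) (Carry i) =
  negb (fired s Reset) && negb (fired s (BitInh 0))
  && all_below (fun j => fired s (Bit (S j))) (i - 1).
Proof.
  intros Hi; apply eq_iff_eq_true; rewrite fired_succ, drive_carry by exact Hi; unfold act.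
  cbn [role_threshold].
  pose proof (rsum_b2R_le (fun j => fired s (Bit (S j))) (i - 1)).
  pose proof (rsum_b2R_full (fun j => fired s (Bit (S j))) (i - 1)) as Hfull.
  destruct (fired s Reset), (fired s (BitInh 0)); cbn [b2R negb andb]; [..|rewrite <- Hfull];
    split; intros; first [reflexivity | discriminate | lra].
Qed.

Lemma fired_output s : state (timer_net m K) xs (S s) NY = xs s || fired s Active.
Proof.
  apply eq_iff_eq_true; rewrite state_succ_true, potential_split by discriminate.
  cbn [timer_net aux_count weight thresh timer_weight timer_threshold].
  change (8 + 4 * m)%nat with (S (7 + 4 * m)).
  rewrite rsum_shift, (rsum_ext _ (fun _ => 0)), rsum_zero.
  - rewrite state_input; change (output_weight (role_of 0)) with 1; unfold fired; cbn [index].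
    destruct (xs s), (state (timer_net m K) xs s (Aux 0)); truth_table.
  - intros i _; destruct (role_of (S i)) eqn:Hr; try (cbn; ring).
    apply role_of_Active in Hr; lia.
Qed.

Definition counter_holds (s k : nat) : Prop :=
  (forall j, (j < m)%nat -> fired s (Bit j) = counter_bit k j) /\
  fired s (BitInh 0) = counter_bit k 0 /\
  (forall i, (1 <= i <= m)%nat ->
     fired s (Carry i) = carry k i /\ fired s (CarryInh i) = carry k i).

Lemma counter_holds_reset s : fired s Reset = true -> counter_holds (S s) 0.
Proof.
  intros HR; split; [|split].
  - intros [|j] Hj; [rewrite fired_bit0|rewrite fired_bit by lia]; now rewrite HR.
  - now rewrite fired_bit_inh0, fired_bit0, HR.
  - intros i Hi; now rewrite fired_carry_inh, fired_carry, HR, carry_zero by lia.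
Qed.

Lemma counter_holds_succ s k :
  counter_holds s k -> fired s Reset = false -> counter_holds (S s) (S k).
Proof.
  intros (Hbit & Hinh & Hcarry) HR.
  assert (Hbit0 : fired (S s) (Bit 0) = counter_bit (S k) 0)
    by (rewrite fired_bit0, HR, Hinh; cbn [counter_bit all_below]; now destruct (counter_bit k 0)).
  split; [|split].
  - intros [|j] Hj; [exact Hbit0|].
    rewrite fired_bit, HR, Hbit by lia.
    rewrite (proj1 (Hcarry (S j) ltac:(lia))), (proj2 (Hcarry (S (S j)) ltac:(lia))).
    change (counter_bit (S k) (S j)) with (xorb (counter_bit k (S j)) (carry k (S j))).
    change (carry k (S (S j))) with (carry k (S j) && counter_bit k (S j)).
    now destruct (carry k (S j)), (counter_bit k (S j)).
  - now rewrite fired_bit_inh0.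
  - intros [|n] Hn; [lia|].
    rewrite fired_carry_inh, fired_carry, HR, Hinh, carry_succ by lia.
    replace (S n - 1)%nat with n by lia.
    now rewrite (all_below_ext _ (fun j => counter_bit k (S j))) by (intros; apply Hbit; lia).
Qed.

Lemma counter_holds_after_spike tau k : xs tau = true ->
  (forall j, (tau < j <= tau + k)%nat -> xs j = false) -> counter_holds (tau + 2 + k) k.
Proof.
  intros Hx; induction k as [|k IH]; intros Hquiet.
  - replace (tau + 2 + 0)%nat with (S (S tau)) by lia.
    apply counter_holds_reset; now rewrite fired_reset.
  - replace (tau + 2 + S k)%nat with (S (tau + 2 + k)) by lia.
    apply counter_holds_succ; [apply IH; intros; apply Hquiet; lia|].
    replace (tau + 2 + k)%nat with (S (tau + 1 + k)) by lia.
    rewrite fired_reset; apply Hquiet; lia.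
Qed.

Lemma stop_after_reset s : fired s Reset = true -> fired (S s) Stop = false.
Proof.
  intros HR; apply not_true_is_false; rewrite fired_succ, drive_stop; unfold act; rewrite HR.
  pose proof (bin_value_bounds m (fun j => fired s (Bit j))); pose proof (pos_INR K).
  cbn [role_threshold b2R]; lra.
Qed.

Lemma stop_of_counter s k : counter_holds s k -> fired s Reset = false -> (k < 2 ^ m)%nat ->
  fired (S s) Stop = (K <=? k)%nat.
Proof.
  intros [Hbit _] HR Hk; apply eq_iff_eq_true.
  rewrite fired_succ, drive_stop, Nat.leb_le; unfold act; rewrite HR.
  rewrite (bin_value_ext _ _ (counter_bit k)), bin_value_counter by assumption.
  cbn [role_threshold b2R]; split; intros H; [apply INR_le; lra|apply le_INR in H; lra].
Qed.

Lemma active_silent s : (forall j, (j < s)%nat -> xs j = false) -> fired s Active = false.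
Proof.
  induction s as [|s IH]; intros Hquiet; [reflexivity|].
  rewrite fired_active, Hquiet, IH by (lia || (intros; apply Hquiet; lia)).
  destruct s as [|s]; [reflexivity|].
  rewrite fired_echo, Hquiet by lia; reflexivity.
Qed.

Lemma active_quiet s : xs (S s) = false -> xs s = false ->
  fired (S (S s)) Active = fired (S s) Active && negb (fired (S s) Stop).
Proof. intros Hs1 Hs0; now rewrite fired_active, fired_echo, Hs1, Hs0. Qed.

Hypothesis K_lt : (K < 2 ^ m)%nat.

Lemma stop_after_spike tau k : xs tau = true ->
  (forall j, (tau < j <= tau + 1 + k)%nat -> xs j = false) -> (k <= K)%nat ->
  fired (tau + 3 + k) Stop = (K <=? k)%nat.
Proof.
  intros Hx Hquiet Hk.
  replace (tau + 3 + k)%nat with (S (tau + 2 + k)) by lia.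
  apply stop_of_counter; [apply counter_holds_after_spike; auto; intros; apply Hquiet; lia| |lia].
  replace (tau + 2 + k)%nat with (S (tau + 1 + k)) by lia.
  rewrite fired_reset; apply Hquiet; lia.
Qed.

Lemma active_after_spike tau d : xs tau = true ->
  (forall j, (tau < j < tau + d)%nat -> xs j = false) -> (1 <= d)%nat ->
  fired (tau + d) Active = (d <? 4 + K)%nat.
Proof.
  intros Hx; induction d as [|d IH]; intros Hquiet Hd; [lia|].
  destruct d as [|[|d]].
  - now rewrite Nat.add_1_r, fired_active, Hx.
  - replace (tau + 2)%nat with (S (S tau)) by lia.
    now rewrite fired_active, fired_echo, Hx, orb_true_r.
  - replace (tau + S (S (S d)))%nat with (S (S (tau + S d))) by lia.
    rewrite active_quiet by (apply Hquiet; lia).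
    replace (S (tau + S d)) with (tau + S (S d))%nat by lia.
    rewrite IH by (lia || (intros; apply Hquiet; lia)).
    destruct d as [|k].
    + replace (tau + 2)%nat with (S (S tau)) by lia.
      now rewrite stop_after_reset by now rewrite fired_reset.
    + destruct (Nat.leb_spec k K).
      * replace (tau + S (S (S k)))%nat with (tau + 3 + k)%nat by lia.
        rewrite stop_after_spike by (auto; intros; apply Hquiet; lia).
        destruct (Nat.leb_spec K k), (Nat.ltb_spec (S (S (S k))) (4 + K)),
          (Nat.ltb_spec (S (S (S (S k)))) (4 + K)); reflexivity || lia.
      * destruct (Nat.ltb_spec (S (S (S k))) (4 + K)), (Nat.ltb_spec (S (S (S (S k)))) (4 + K));
          reflexivity || lia.
Qed.

Lemma active_window s :
  fired s Active = true <-> exists tau, (tau < s < tau + (4 + K))%nat /\ xs tau = true.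
Proof.
  destruct (last_spike xs s) as [Hsilent | (tau & Htau & Hx & Hquiet)].
  - rewrite active_silent by exact Hsilent; split; [discriminate|].
    intros (tau & Hs & Hx); rewrite Hsilent in Hx; [discriminate|lia].
  - replace s with (tau + (s - tau))%nat at 1 by lia.
    rewrite active_after_spike, Nat.ltb_lt by (auto; lia || (intros; apply Hquiet; lia)).
    split; [intros; exists tau; split; [lia|exact Hx]|].
    intros (tau' & Hs & Hx'); destruct (Nat.le_gt_cases tau' tau); [lia|].
    rewrite Hquiet in Hx'; [discriminate|lia].
Qed.

End TimerDynamics.

Theorem timer_net_is_timer m K : (K < 2 ^ m)%nat -> is_timer (timer_net m K) (4 + K).
Proof.
  intros HK; split; [apply timer_net_well_formed|].
  intros xs [|s].
  - split; [easy|]; intros (tau & _ & H & _); lia.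
  - rewrite fired_output, orb_true_iff, active_window by exact HK; split.
    + intros [Hx | (tau & Hs & Hx)]; [exists s | exists tau]; repeat split; auto; lia.
    + intros (tau & H1 & H2 & Hx); destruct (Nat.eq_dec tau s) as [->|]; [now left|].
      right; exists tau; split; [lia|exact Hx].
Qed.

Lemma timer_net_size t : (4 <= t)%nat ->
  exists N, is_timer N t /\ aux_count N = (12 + 4 * Nat.log2 t)%nat.
Proof.
  intros Ht; exists (timer_net (S (Nat.log2 t)) (t - 4)); split; [|cbn; lia].
  pose proof (Nat.log2_spec t ltac:(lia)).
  replace t with (4 + (t - 4))%nat at 3 by lia.
  apply timer_net_is_timer; lia.
Qed.

Lemma ln_INR_ge_pow2 t k : (2 ^ k <= t)%nat -> INR k * ln 2 <= ln (INR t).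
Proof.
  intros Hk; rewrite <- ln_pow by lra.
  apply le_INR in Hk; rewrite INR_pow2 in Hk.
  destruct (Rle_lt_or_eq_dec _ _ Hk) as [Hlt| ->]; [|lra].
  left; apply ln_increasing; [apply pow_lt; lra|exact Hlt].
Qed.

Lemma ln_INR_lt_pow2 t k : (0 < t)%nat -> (t < 2 ^ k)%nat -> ln (INR t) < INR k * ln 2.
Proof.
  intros Ht Hk; rewrite <- ln_pow by lra.
  apply ln_increasing; [apply lt_0_INR; lia|].
  apply lt_INR in Hk; now rewrite INR_pow2 in Hk.
Qed.

Lemma ln_2_lt_1 : ln 2 < 1.
Proof.
  rewrite <- (ln_exp 1); apply ln_increasing; [lra|].
  pose proof (exp_ineq1 1 ltac:(lra)); lra.
Qed.

Lemma ln_INR_ge_1 t : (4 <= t)%nat -> 1 <= ln (INR t).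
Proof.
  intros Ht; rewrite <- (ln_exp 1); left; apply ln_increasing; [apply exp_pos|].
  apply le_INR in Ht; cbn [INR] in Ht; pose proof exp_le_3; lra.
Qed.

Theorem theorem1 :
  (* (1) upper bound: O(log t) gates suffice *)
  (exists (c : R) (t0 : nat), 0 < c /\
     forall t : nat, (0 < t)%nat -> (t0 <= t)%nat ->
       exists N : network, is_timer N t /\ INR (aux_count N) <= c * ln (INR t)) /\
  (* (2) lower bound: Omega(log t) neurons are necessary *)
  (exists (c : R) (t0 : nat), 0 < c /\
     forall t : nat, (0 < t)%nat -> (t0 <= t)%nat ->
       forall N : network, is_timer N t -> c * ln (INR t) <= INR (aux_count N)).
Proof.
  split.
  - exists 20, 4%nat; split; [lra|]; intros t Ht Ht4.
    destruct (timer_net_size t Ht4) as (N & HN & Hsize); exists N; split; [exact HN|].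
    pose proof (ln_INR_ge_pow2 t _ (proj1 (Nat.log2_spec t Ht))).
    pose proof (ln_INR_ge_1 t ltac:(lia)); pose proof ln_lt_2; pose proof (pos_INR (Nat.log2 t)).
    rewrite Hsize, plus_INR, mult_INR; cbn [INR]; nra.
  - exists (1 / 3), 4%nat; split; [lra|]; intros t Ht Ht4 N HN.
    pose proof (timer_size_lower_bound N t HN) as Hbound.
    assert (Hn : (1 <= aux_count N)%nat)
      by (destruct (aux_count N); [cbn in Hbound; lia|lia]).
    pose proof (ln_INR_lt_pow2 t _ Ht Hbound); pose proof ln_2_lt_1.
    apply le_INR in Hn; rewrite plus_INR in *; cbn [INR] in *; nra.
Qed.
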